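(* Let $B$ be a finite set of Boolean functions and let $B^d=\{f^d: f\in B\}$. Then for each $X\in\{F,C\}$ and $Y\in\{l,s\}$, $\mathrm{MEE}^{X}_{Y}(B)\equiv_m^{\log}\mathrm{MEE}^{X}_{Y}(B^d)$ (equivalence under logspace many-one reductions).
   Context: A Boolean function is a map $f\colon\{0,1\}^n\to\{0,1\}$. For $n$-ary $f$, $f^d(x_1,\dots,x_n)=\overline{f(\overline{x_1},\dots,\overline{x_n})}$. For a finite set $B$ of Boolean functions, $B$-formulas: every variable is one, and $f(\varphi_1,\dots,\varphi_n)$ is one for $f\in B$ $n$-ary and $B$-formulas $\varphi_i$; $B$-circuits are the DAG analogue with non-input gates labeled by functions of $B$. Equivalence $\equiv$ means equal value under all assignments. $\mathrm{size}_l$ counts variable occurrences (input gates), $\mathrm{size}_s$ counts function symbols (non-input gates). $\mathrm{MEE}^{F}_{Y}(B)$ (resp. $\mathrm{MEE}^{C}_{Y}(B)$): given a $B$-formula (resp. $B$-circuit) $\varphi$ and a natural number $k$, is there a $B$-formula (resp. $B$-circuit) $\psi$ with $\mathrm{size}_Y(\psi)\le k$ and $\psi\equiv\varphi$? *)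

From mathcomp Require Import all_boot.
Set Implicit Arguments. Unset Strict Implicit. Unset Printing Implicit Defensive.

Definition bfun := {n : nat & {ffun n.-tuple bool -> bool}}.

Definition arity (f : bfun) : nat := tag f.

(* Application of f to a list of argument values (false if arity mismatch;
   only used on well-formed objects, where the arity always matches). *)
Definition bapp (f : bfun) (vs : seq bool) : bool :=
  match (insub vs : option ((tag f).-tuple bool)) with
  | Some t => tagged f t
  | None => false
  end.

Definition dual (f : bfun) : bfun :=
  existT (fun n => {ffun n.-tuple bool -> bool}) (tag f)
    [ffun t : (tag f).-tuple bool => ~~ tagged f (map_tuple negb t)].

Definition dualset (B : seq bfun) : seq bfun := map dual B.

Definition assignment := nat -> bool.

Inductive form : Type :=
| Var : nat -> form
| App : bfun -> seq form -> form.

Fixpoint feval (a : assignment) (phi : form) : bool :=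
  match phi with
  | Var i => a i
  | App f args => bapp f (map (feval a) args)
  end.

Fixpoint is_Bformula (B : seq bfun) (phi : form) : bool :=
  match phi with
  | Var _ => true
  | App f args => [&& f \in B, size args == arity f & all (is_Bformula B) args]
  end.

Fixpoint fsize_l (phi : form) : nat :=
  match phi with
  | Var _ => 1
  | App _ args => sumn (map fsize_l args)
  end.

Fixpoint fsize_s (phi : form) : nat :=
  match phi with
  | Var _ => 0
  | App _ args => (sumn (map fsize_s args)).+1
  end.

Definition fequiv (psi phi : form) : Prop := forall a : assignment, feval a psi = feval a phi.

(* A circuit is a nonempty list of gates in topological order; gate i is
   either an input gate labelled by a variable, or a gate labelled by a
   function f whose inputs are (indices of) earlier gates. The last gate
   is the output gate. *)
Inductive gate : Type :=
| In : nat -> gate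
| Gt : bfun -> seq nat -> gate.

Definition circuit := seq gate.

Definition gate_val (a : assignment) (vs : seq bool) (g : gate) : bool :=
  match g with
  | In j => a j
  | Gt f ins => bapp f (map (nth false vs) ins)
  end.

Definition cvals (a : assignment) (c : circuit) : seq bool :=
  foldl (fun vs g => rcons vs (gate_val a vs g)) [::] c.

Definition ceval (a : assignment) (c : circuit) : bool := last false (cvals a c).

Definition gate_ok (B : seq bfun) (i : nat) (g : gate) : bool :=
  match g with
  | In _ => true
  | Gt f ins => [&& f \in B, size ins == arity f & all (fun j => j < i) ins]
  end.

Definition is_Bcircuit (B : seq bfun) (c : circuit) : bool :=
  (0 < size c) && all (fun i => gate_ok B i (nth (In 0) c i)) (iota 0 (size c)).

Definition is_input (g : gate) : bool := if g is In _ then true else false.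

Definition csize_l (c : circuit) : nat := count is_input c.
Definition csize_s (c : circuit) : nat := count (predC is_input) c.

Definition cequiv (psi phi : circuit) : Prop := forall a : assignment, ceval a psi = ceval a phi.

Inductive token := T0 | T1 | Tx | Tf | Tlp | Trp | Tcomma | Thash.

Definition tok_bits (t : token) : seq bool :=
  match t with
  | T0 => [:: false; false; false]
  | T1 => [:: false; false; true]
  | Tx => [:: false; true; false]
  | Tf => [:: false; true; true]
  | Tlp => [:: true; false; false]
  | Trp => [:: true; false; true]
  | Tcomma => [:: true; true; false]
  | Thash => [:: true; true; true]
  end.

Definition to_bits (ts : seq token) : seq bool := flatten (map tok_bits ts).

Definition bit_tok (b : bool) : token := if b then T1 else T0.

(* binary representation, most significant bit first; bin 0 = "0" *)
Fixpoint binrev (fuel n : nat) : seq bool :=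
  match fuel with
  | 0 => [::]
  | fuel'.+1 => if n is 0 then [::] else odd n :: binrev fuel' n./2
  end.

Definition bin (n : nat) : seq token :=
  if n == 0 then [:: T0] else map bit_tok (rev (binrev n n)).

Definition enc_fun (f : bfun) : seq token :=
  bin (arity f) ++ Thash :: map bit_tok (fgraph (tagged f)).

Fixpoint sep_by (s : seq (seq token)) : seq token :=
  match s with
  | [::] => [::]
  | [:: x] => x
  | x :: s' => x ++ Tcomma :: sep_by s'
  end.

Fixpoint enc_form (phi : form) : seq token :=
  match phi with
  | Var i => Tx :: bin i
  | App f args => Tf :: enc_fun f ++ Tlp :: sep_by (map enc_form args) ++ [:: Trp]
  end.

Definition enc_gate (g : gate) : seq token :=
  match g with
  | In j => Tx :: bin j
  | Gt f ins => Tf :: enc_fun f ++ Tlp :: sep_by (map bin ins) ++ [:: Trp]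
  end.

Definition enc_circuit (c : circuit) : seq token := flatten (map enc_gate c).

Inductive kindX := XF | XC.
Inductive kindY := Yl | Ys.

Definition fsize (Y : kindY) := match Y with Yl => fsize_l | Ys => fsize_s end.
Definition csize (Y : kindY) := match Y with Yl => csize_l | Ys => csize_s end.

Definition MEE (X : kindX) (Y : kindY) (B : seq bfun) (s : seq bool) : Prop :=
  match X with
  | XF => exists (phi : form) (k : nat),
      s = to_bits (enc_form phi ++ Thash :: bin k) /\ is_Bformula B phi /\
      exists psi : form, is_Bformula B psi /\ fsize Y psi <= k /\ fequiv psi phi
  | XC => exists (phi : circuit) (k : nat),
      s = to_bits (enc_circuit phi ++ Thash :: bin k) /\ is_Bcircuit B phi /\
      exists psi : circuit, is_Bcircuit B psi /\ csize Y psi <= k /\ cequiv psi phi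
  end.

(* Deterministic machine with a two-way read-only input tape with end
   markers, one work tape over {0,1,blank}, and a one-way write-only output
   tape over {0,1}. *)
Inductive move := ML | MS | MR.

Record LTM := {
  Q : finType;
  q0 : Q;
  halting : pred Q;
  (* state, input symbol (None = end marker), work symbol (None = blank) ->
     new state, input move, symbol written on work tape, work move,
     optional output bit *)
  delta : Q -> option bool -> option bool ->
          Q * move * option bool * move * option bool
}.

Record config (M : LTM) := Config {
  st : Q M;
  ihead : nat;                (* 0 = left marker, 1..n = input, n+1 = right marker *)
  wtape : nat -> option bool;
  whead : nat;
  out : seq bool
}.

Definition read_input (x : seq bool) (i : nat) : option bool :=
  if (0 < i) && (i <= size x) then Some (nth false x i.-1) else None.

Definition move_in (n : nat) (m : move) (i : nat) : nat :=
  match m with ML => i.-1 | MS => i | MR => minn i.+1 n.+1 end.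

Definition move_w (m : move) (i : nat) : nat :=
  match m with ML => i.-1 | MS => i | MR => i.+1 end.

Definition step (M : LTM) (x : seq bool) (c : config M) : config M :=
  if @halting M (st c) then c else
  let: (q', mi, w, mw, o) :=
     @delta M (st c) (read_input x (ihead c)) (wtape c (whead c)) in
  @Config M q' (move_in (size x) mi (ihead c))
    (fun j => if j == whead c then w else wtape c j)
    (move_w mw (whead c))
    (if o is Some b then rcons (out c) b else out c).

Definition init_config (M : LTM) : config M :=
  @Config M (@q0 M) 0 (fun _ => None) 0 [::].

Definition run (M : LTM) (x : seq bool) (t : nat) : config M :=
  iter t (@step M x) (init_config M).

Definition logspace_computable (f : seq bool -> seq bool) : Prop :=
  exists (M : LTM) (c : nat), forall x : seq bool, exists t : nat,
    @halting M (st (run M x t)) /\ out (run M x t) = f x /\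
    forall s, s <= t -> whead (run M x s) <= c * trunc_log 2 (size x).+2 + c.

Definition logspace_reducible (A B : seq bool -> Prop) : Prop :=
  exists f, logspace_computable f /\ forall x, A x <-> B (f x).

Definition logspace_equiv (A B : seq bool -> Prop) : Prop :=
  logspace_reducible A B /\ logspace_reducible B A.

From HB Require Import structures.
From mathcomp Require Import all_boot zify.
Set Implicit Arguments. Unset Strict Implicit. Unset Printing Implicit Defensive.

(* Replacing every function symbol f by f^d turns a B-formula (B-circuit) phi
   into a B^d-formula (B^d-circuit) phi^d of the same sizes with
   phi^d(x) = not phi(not x), so psi == phi iff psi^d == phi^d.  On encodings this
   only replaces each header "f enc(g) (" by the equally long "f enc(g^d) (";
   since B is finite, a finite-state transducer buffering one header at a time
   does it, and a finite-state transducer runs in logspace without using its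
   work tape.  The rewriting is an involution, so it also reduces back. *)

Section FiniteTransducer.
Variables (R : choiceType) (r0 : R) (next : R -> bool -> R * seq bool)
  (flush : R -> seq bool) (reach : seq R).
Hypothesis r0_reach : r0 \in reach.
Hypothesis next_reach : forall r b, r \in reach -> (next r b).1 \in reach.

Fixpoint transduce (r : R) (x : seq bool) : seq bool :=
  match x with
  | [::] => flush r
  | b :: x' => (next r b).2 ++ transduce (next r b).1 x'
  end.

Definition rstate := seq_sub reach.

Definition emit_bound := \max_(r <- reach)
   maxn (size (next r true).2) (maxn (size (next r false).2) (size (flush r))).

Lemma size_next_le (r : rstate) b : size (next (ssval r) b).2 <= emit_bound.
Proof.
apply: leq_trans (leq_bigmax_seq _ (ssvalP r) isT).
by case: b; rewrite ?leq_maxl // (leq_trans _ (leq_maxr _ _)) // leq_maxl.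
Qed.

Lemma size_flush_le (r : rstate) : size (flush (ssval r)) <= emit_bound.
Proof.
apply: leq_trans (leq_bigmax_seq _ (ssvalP r) isT).
by rewrite (leq_trans _ (leq_maxr _ _)) // leq_maxr.
Qed.

(* The machine simulates the transducer in its finite control: it remembers the
   transducer state and how many bits of the pending output it has written, and
   never touches its work tape. *)
Definition mstate : finType :=
  ((unit + rstate) + ((rstate * bool * 'I_emit_bound.+1)
                      + ((rstate * 'I_emit_bound.+1) + unit)))%type.

Definition qStart : mstate := inl (inl tt).
Definition qRead r : mstate := inl (inr r).
Definition qEmit r b j : mstate := inr (inl (r, b, j)).
Definition qFlush r j : mstate := inr (inr (inl (r, j))).
Definition qDone : mstate := inr (inr (inr tt)).

Definition rstate0 : rstate := SeqSub r0_reach.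

Definition mdelta (q : mstate) (i : option bool) (w : option bool) :
  mstate * move * option bool * move * option bool :=
  match q with
  | inl (inl _) => (qRead rstate0, MR, None, MS, None)
  | inl (inr r) => match i with
                   | Some b => (qEmit r b ord0, MS, None, MS, None)
                   | None => (qFlush r ord0, MS, None, MS, None)
                   end
  | inr (inl (r, b, j)) =>
      let w := (next (ssval r) b).2 in
      if j < size w then (qEmit r b (inord j.+1), MS, None, MS, Some (nth false w j))
      else (qRead (insubd r (next (ssval r) b).1), MR, None, MS, None)
  | inr (inr (inl (r, j))) =>
      let w := flush (ssval r) in
      if j < size w then (qFlush r (inord j.+1), MS, None, MS, Some (nth false w j))
      else (qDone, MS, None, MS, None)
  | inr (inr (inr _)) => (qDone, MS, None, MS, None)
  end.

Definition machine : LTM :=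
  {| Q := mstate; q0 := qStart; halting := fun q => q == qDone; delta := mdelta |}.

Variable x : seq bool.

Lemma mdelta_work_stay (q : mstate) i w : (@delta machine q i w).1.2 = MS.
Proof.
case: q => [[[]|r]|[[[r b] j]|[[r j]|[]]]] //=; first by case: i.
  by case: ifP.
by case: ifP.
Qed.

Lemma run_whead0 t : whead (run machine x t) = 0.
Proof.
elim: t => //= t IH; rewrite /step; case: ifP => // _.
have := mdelta_work_stay (st (run machine x t)) (read_input x (ihead (run machine x t)))
  (wtape (run machine x t) (whead (run machine x t))).
by case: (@delta machine _ _ _) => [[[[q' mi] w'] mw] o] /= ->; rewrite IH.
Qed.

Lemma step_active (c : config machine) : st c != qDone ->
  let D := @delta machine (st c) (read_input x (ihead c)) (wtape c (whead c)) in
  [/\ st (step x c) = D.1.1.1.1,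
      ihead (step x c) = move_in (size x) D.1.1.1.2 (ihead c)
    & out (step x c) = if D.2 is Some b then rcons (out c) b else out c].
Proof.
move=> /negbTE H; rewrite /step [@halting machine _]H.
by case: (@delta machine _ _ _) => [[[[q' mi] w'] mw] o]; split.
Qed.

Lemma run_flush k : forall (r : rstate) (j : 'I_emit_bound.+1) (c : config machine),
  st c = qFlush r j -> size (flush (ssval r)) - j = k ->
  exists t, st (iter t (step x) c) = qDone /\
            out (iter t (step x) c) = out c ++ drop j (flush (ssval r)).
Proof.
elim: k => [|k IH] r j c Hst Hk;
  have [Hs _ Ho] := step_active (c:=c) ltac:(by rewrite Hst);
  rewrite Hst /= in Hs Ho.
  have Hj : j < size (flush (ssval r)) = false
    by apply/negbTE; rewrite -leqNgt -subn_eq0 Hk.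
  rewrite Hj in Hs Ho.
  by exists 1; rewrite Ho drop_oversize ?cats0 // leqNgt Hj.
have Hj : j < size (flush (ssval r)) by rewrite -subn_gt0 Hk.
rewrite Hj in Hs Ho.
have Hj1 : j.+1 < emit_bound.+1 by rewrite ltnS (leq_trans Hj) // size_flush_le.
have [t [Ht1 Ht2]] := IH r (inord j.+1) (step x c) Hs
  ltac:(by rewrite inordK // subnS Hk).
exists t.+1; rewrite iterSr Ht2 Ho inordK // (drop_nth false Hj) cat_rcons.
by [].
Qed.

Lemma run_emit k : forall (r : rstate) b (j : 'I_emit_bound.+1) (c : config machine),
  st c = qEmit r b j -> size (next (ssval r) b).2 - j = k ->
  exists t, [/\ st (iter t (step x) c) = qRead (insubd r (next (ssval r) b).1),
                ihead (iter t (step x) c) = move_in (size x) MR (ihead c)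
              & out (iter t (step x) c) = out c ++ drop j (next (ssval r) b).2].
Proof.
elim: k => [|k IH] r b j c Hst Hk;
  have [Hs Hi Ho] := step_active (c:=c) ltac:(by rewrite Hst);
  rewrite Hst /= in Hs Hi Ho.
  have Hj : j < size (next (ssval r) b).2 = false
    by apply/negbTE; rewrite -leqNgt -subn_eq0 Hk.
  rewrite Hj in Hs Hi Ho.
  by exists 1; rewrite Ho drop_oversize ?cats0 // leqNgt Hj.
have Hj : j < size (next (ssval r) b).2 by rewrite -subn_gt0 Hk.
rewrite Hj in Hs Hi Ho.
have Hj1 : j.+1 < emit_bound.+1 by rewrite ltnS (leq_trans Hj) // size_next_le.
have [t [Ht1 Ht2 Ht3]] := IH r b (inord j.+1) (step x c) Hs
  ltac:(by rewrite inordK // subnS Hk).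
exists t.+1; rewrite !iterSr Ht2 Hi Ht3 Ho inordK // (drop_nth false Hj) cat_rcons.
by [].
Qed.

Lemma read_input_end i : 0 < i -> drop i.-1 x = [::] -> read_input x i = None.
Proof.
move=> Hi0 /(congr1 size); rewrite size_drop /= => /eqP; rewrite subn_eq0 => Hx.
by rewrite /read_input Hi0 /= leqNgt -(ltn_predK Hi0) ltnS Hx.
Qed.

Lemma read_input_cons i b y : 0 < i -> drop i.-1 x = b :: y ->
  [/\ read_input x i = Some b, i <= size x & drop i x = y].
Proof.
move=> Hi0 Hd; have Hx : i.-1 < size x.
  by rewrite ltnNge; apply/negP => H; move: Hd; rewrite drop_oversize.
rewrite (drop_nth false Hx) in Hd; case: Hd => <- <-.
have Hin : i <= size x by rewrite -(ltn_predK Hi0).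
by rewrite /read_input Hi0 Hin -{3}(ltn_predK Hi0).
Qed.

Lemma run_read y : forall (r : rstate) i (c : config machine),
  st c = qRead r -> ihead c = i -> 0 < i -> drop i.-1 x = y ->
  exists t, st (iter t (step x) c) = qDone /\
            out (iter t (step x) c) = out c ++ transduce (ssval r) y.
Proof.
elim: y => [|b y IH] r i c Hst Hi Hi0 Hd;
  have [Hs Hi' Ho] := step_active (c:=c) ltac:(by rewrite Hst).
  rewrite Hst Hi read_input_end //= in Hs Ho.
  have [t [Ht1 Ht2]] := @run_flush _ r ord0 (step x c) Hs erefl.
  by exists t.+1; rewrite iterSr Ht2 Ho drop0.
have [Hri Hin Hd'] := read_input_cons Hi0 Hd.
rewrite Hst Hi Hri /= in Hs Hi' Ho.
have [t [Ht1 Ht2 Ht3]] := @run_emit _ r b ord0 (step x c) Hs erefl.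
have Hih : ihead (iter t (step x) (step x c)) = i.+1.
  by rewrite Ht2 Hi' /=; apply/minn_idPl.
have [t' [Ht1' Ht2']] := IH _ i.+1 _ Ht1 Hih isT Hd'.
exists (t' + t).+1; rewrite iterSr iterD Ht2' Ht3 Ho drop0 insubdK ?catA //.
exact/next_reach/ssvalP.
Qed.

Lemma machine_correct : exists t, @halting machine (st (run machine x t)) /\
   out (run machine x t) = transduce r0 x /\
   forall s, s <= t -> whead (run machine x s) <= 1 * trunc_log 2 (size x).+2 + 1.
Proof.
pose c1 := step x (init_config machine).
have Hi1 : ihead c1 = 1 by rewrite /c1 /step /= /minn; case: (size x).
have [t [Ht1 Ht2]] := @run_read x rstate0 1 c1 erefl Hi1 isT (drop0 _).
exists t.+1; rewrite /run iterSr; split; first by rewrite /= Ht1.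
by split=> [|s _]; [rewrite Ht2 | rewrite -/(run machine x s) run_whead0].
Qed.

End FiniteTransducer.

Lemma transduce_logspace (R : choiceType) (r0 : R) next flush (reach : seq R) :
  r0 \in reach -> (forall r b, r \in reach -> (next r b).1 \in reach) ->
  logspace_computable (transduce next flush r0).
Proof. by move=> H0 Hcl; exists (machine next flush H0), 1 => x; exact: machine_correct. Qed.

Definition tok_code (t : token) : nat :=
  match t with
  | T0 => 0 | T1 => 1 | Tx => 2 | Tf => 3 | Tlp => 4 | Trp => 5 | Tcomma => 6 | Thash => 7
  end.
Definition code_tok (n : nat) : token :=
  match n with
  | 0 => T0 | 1 => T1 | 2 => Tx | 3 => Tf | 4 => Tlp | 5 => Trp | 6 => Tcomma | _ => Thash
  end.
Lemma tok_codeK : cancel tok_code code_tok. Proof. by case. Qed.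
HB.instance Definition _ := Countable.copy token (can_type tok_codeK).

Definition header_tok (t : token) : bool := match t with Tf | Tlp => false | _ => true end.
Definition passive_tok (t : token) : bool := if t is Tf then false else true.

Lemma header_passive u : all header_tok u -> all passive_tok u.
Proof. by apply: sub_all; case. Qed.

Definition block (u : seq token) : seq token := Tf :: u ++ [:: Tlp].

Lemma block_cat u ts : Tf :: u ++ Tlp :: ts = block u ++ ts.
Proof. by rewrite /block /= -catA. Qed.

Lemma block_inj : injective block.
Proof. by move=> u v []; rewrite !cats1 => /rcons_inj [->]. Qed.

Fixpoint bounded_seqs (T : Type) (univ : seq T) (n : nat) : seq (seq T) :=
  if n is n'.+1 then [::] :: [seq x :: s | x <- univ, s <- bounded_seqs univ n']
  else [:: [::]].

Lemma mem_bounded_seqs (T : eqType) (univ : seq T) n s : (forall x, x \in univ) ->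
  (s \in bounded_seqs univ n) = (size s <= n).
Proof.
move=> Huniv; elim: n s => [|n IH] [|x s] //=.
rewrite in_cons /= ltnS -IH; apply/allpairsP/idP => [[[y t] /= [_ Ht [_ ->]]] //|H].
by exists (x, s).
Qed.

Definition all_tokens : seq token := [:: T0; T1; Tx; Tf; Tlp; Trp; Tcomma; Thash].

Lemma mem_all_tokens t : t \in all_tokens.
Proof. by case: t. Qed.

Lemma mem_all_bools b : b \in [:: true; false].
Proof. by case: b. Qed.

Section BlockRewriting.
Variables (L : nat) (rw : seq token -> seq token).
Hypothesis L_gt0 : 0 < L.
Hypothesis rw_block : forall u, all header_tok u -> size u < L ->
  exists2 u', rw (block u) = block u' &
    [/\ all header_tok u', size u' = size u & rw (block u') = block u].

(* The state is the pending block [Tf :: u], if any; it is given up (flushed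
   unchanged) as soon as it would exceed [L] tokens or is interrupted by [Tf]. *)
Definition blk_next (s : option (seq token)) (t : token) : option (seq token) * seq token :=
  match s, t with
  | None, Tf => (Some [:: Tf], [::])
  | None, _ => (None, [:: t])
  | Some buf, Tlp => (None, rw (rcons buf Tlp))
  | Some buf, Tf => (Some [:: Tf], buf)
  | Some buf, _ => if size buf < L then (Some (rcons buf t), [::]) else (None, rcons buf t)
  end.

Definition blk_flush (s : option (seq token)) : seq token := if s is Some buf then buf else [::].

Fixpoint blk_run (s : option (seq token)) (ts : seq token) : seq token :=
  match ts with
  | [::] => blk_flush s
  | t :: ts' => (blk_next s t).2 ++ blk_run (blk_next s t).1 ts'
  end.

Definition blk_rewrite := blk_run None.

Lemma blk_run_header_cons buf t ts : header_tok t -> blk_run (Some buf) (t :: ts) =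
  if size buf < L then blk_run (Some (rcons buf t)) ts else rcons buf t ++ blk_rewrite ts.
Proof. by case: t => //= _; case: ifP. Qed.

Lemma blk_rewrite_passive t ts : passive_tok t -> blk_rewrite (t :: ts) = t :: blk_rewrite ts.
Proof. by case: t. Qed.

Lemma blk_rewrite_passive_cat u ts :
  all passive_tok u -> blk_rewrite (u ++ ts) = u ++ blk_rewrite ts.
Proof. by elim: u => //= t u IH /andP[Ht Hu]; rewrite blk_rewrite_passive // IH. Qed.

Lemma blk_rewrite_passive_id u : all passive_tok u -> blk_rewrite u = u.
Proof. by move=> Hu; rewrite -[u]cats0 blk_rewrite_passive_cat. Qed.

Lemma blk_run_header buf u ts : all header_tok u -> size buf <= L ->
  blk_run (Some buf) (u ++ ts) =
  if size buf + size u <= L then blk_run (Some (buf ++ u)) ts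
  else buf ++ u ++ blk_rewrite ts.
Proof.
elim: u buf => [|t u IH] buf; first by rewrite addn0 cats0 => _ ->.
move=> /andP[Ht Hu] Hbuf; rewrite cat_cons blk_run_header_cons //.
case: ltnP => HL; first by rewrite IH ?size_rcons // addSnnS !cat_rcons.
have -> : size buf = L by apply/eqP; rewrite eqn_leq Hbuf HL.
rewrite addnS ltnNge leq_addr /= blk_rewrite_passive_cat ?header_passive //.
by rewrite cat_rcons.
Qed.

Lemma blk_rewrite_block u ts : all header_tok u -> blk_rewrite (block u ++ ts) =
  (if size u < L then rw (block u) else block u) ++ blk_rewrite ts.
Proof.
move=> Hu; rewrite /blk_rewrite /= -catA blk_run_header //= add1n.
by case: ifP => _ //=; [rewrite -cats1 | rewrite blk_rewrite_passive // -catA].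
Qed.

Lemma blk_rewrite_interrupted u ts : all header_tok u ->
  blk_rewrite (Tf :: u ++ Tf :: ts) = Tf :: u ++ blk_rewrite (Tf :: ts).
Proof. by move=> Hu; rewrite /blk_rewrite /= blk_run_header //= add1n; case: ifP. Qed.

Lemma blk_rewrite_unterminated u : all header_tok u -> blk_rewrite (Tf :: u) = Tf :: u.
Proof.
move=> Hu; rewrite /blk_rewrite /= -[u]cats0 blk_run_header //= add1n.
by case: ifP => _ /=; rewrite !cats0.
Qed.

Lemma split_header_prefix ts : exists u rest, [/\ ts = u ++ rest, all header_tok u &
   rest = [::] \/ exists ts', rest = Tf :: ts' \/ rest = Tlp :: ts'].
Proof.
elim: ts => [|t ts [u [rest [-> Hu Hrest]]]]; first by exists [::], [::]; split=> //; left.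
case Ht: (header_tok t); first by exists (t :: u), rest; split=> //=; rewrite Ht.
exists [::], (t :: u ++ rest); split=> //; right; exists (u ++ rest).
by case: t Ht => //; [left | right].
Qed.

Lemma blk_rewrite_Tf ts : exists ts', blk_rewrite (Tf :: ts) = Tf :: ts'.
Proof.
have [u [rest [-> Hu [->|[ts' [->|->]]]]]] := split_header_prefix ts.
- by rewrite cats0 blk_rewrite_unterminated //; eexists.
- by rewrite blk_rewrite_interrupted //; eexists.
rewrite block_cat.
rewrite (blk_rewrite_block _ Hu); case: ifP => HL; last by eexists.
by have [u' -> _] := rw_block Hu HL; eexists.
Qed.

Lemma blk_rewriteK : involutive blk_rewrite.
Proof.
move=> ts; move: {2}(size ts) (leqnn (size ts)) => n.
elim: n ts => [|n IH] [|t ts] //= Hn.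
case Ht: (passive_tok t); first by rewrite !blk_rewrite_passive // IH.
case: t Ht => // _; move: Hn.
have [u [rest [-> Hu [->|[ts' [->|->]]]]]] := split_header_prefix ts; rewrite size_cat ltnS.
- by rewrite cats0 !blk_rewrite_unterminated.
- move=> Hn; have [ts'' Hts''] := blk_rewrite_Tf ts'.
  rewrite blk_rewrite_interrupted // Hts'' blk_rewrite_interrupted // -Hts'' IH //=.
  by move: Hn => /=; lia.
rewrite block_cat => Hn.
have Hts' : size ts' <= n by move: Hn => /=; lia.
rewrite blk_rewrite_block //; case: ifP => HL; last by rewrite blk_rewrite_block // HL IH.
have [u' -> [Hu' Hsize Hback]] := rw_block Hu HL.
by rewrite blk_rewrite_block // Hsize HL Hback IH.
Qed.

Definition bits_tok (s : seq bool) : token :=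
  match s with
  | [:: a; b; c] =>
    match a, b, c with
    | false, false, false => T0 | false, false, true => T1
    | false, true, false => Tx | false, true, true => Tf
    | true, false, false => Tlp | true, false, true => Trp
    | true, true, false => Tcomma | true, true, true => Thash
    end
  | _ => T0
  end.

Definition bit_state := (seq bool * option (seq token))%type.

Definition bit_next (ps : bit_state) (b : bool) : bit_state * seq bool :=
  let: (p, s) := ps in
  if size p == 2 then (([::], (blk_next s (bits_tok (rcons p b))).1),
                       to_bits (blk_next s (bits_tok (rcons p b))).2)
  else ((rcons p b, s), [::]).

Definition bit_flush (ps : bit_state) : seq bool := to_bits (blk_flush ps.2) ++ ps.1.

Definition bit_rewrite := transduce bit_next bit_flush ([::], None).

Lemma to_bits_cat ts ts' : to_bits (ts ++ ts') = to_bits ts ++ to_bits ts'.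
Proof. by rewrite /to_bits map_cat flatten_cat. Qed.

Lemma transduce_bit_token s t y :
  transduce bit_next bit_flush ([::], s) (tok_bits t ++ y) =
  to_bits (blk_next s t).2 ++ transduce bit_next bit_flush ([::], (blk_next s t).1) y.
Proof. by case: t. Qed.

Lemma transduce_bit_tokens ts s r : size r < 3 ->
  transduce bit_next bit_flush ([::], s) (to_bits ts ++ r) = to_bits (blk_run s ts) ++ r.
Proof.
move=> Hr; elim: ts s => [|t ts IH] s.
  by case: r Hr => [|a [|b [|c r]]] //= _; rewrite /bit_flush /= ?cats0.
rewrite /to_bits /= -catA -/(to_bits _) transduce_bit_token IH -/(to_bits _).
by rewrite to_bits_cat catA.
Qed.

Lemma bit_rewrite_tokens ts r : size r < 3 ->
  bit_rewrite (to_bits ts ++ r) = to_bits (blk_rewrite ts) ++ r.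
Proof. exact: transduce_bit_tokens. Qed.

Lemma to_bits_split x : exists ts r, x = to_bits ts ++ r /\ size r < 3.
Proof.
move: {2}(size x) (leqnn (size x)) => n; elim: n x => [|n IH] x Hx.
  by exists [::], x; case: x Hx.
case: x Hx => [|a [|b [|c x]]] Hx;
  try by exists [::], [:: a; b] || exists [::], [:: a] || exists [::], [::].
have [ts [r [-> Hr]]] := IH x ltac:(by move: Hx => /=; lia).
exists (bits_tok [:: a; b; c] :: ts), r; split=> //; clear Hx.
by rewrite /to_bits /= -/(to_bits ts); case: a; case: b; case: c.
Qed.

Lemma bit_rewriteK : involutive bit_rewrite.
Proof.
move=> x; have [ts [r [-> Hr]]] := to_bits_split x.
by rewrite !bit_rewrite_tokens // blk_rewriteK.
Qed.

Definition bit_states : seq bit_state :=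
  [seq (p, s) | p <- bounded_seqs [:: true; false] 2,
                s <- None :: map Some (bounded_seqs all_tokens L)].

Lemma mem_bit_states ps : (ps \in bit_states) =
  (size ps.1 <= 2) && (if ps.2 is Some buf then size buf <= L else true).
Proof.
case: ps => p s; apply/allpairsP/idP.
  case=> [[p' s'] [Hp Hs [-> ->]]].
  rewrite mem_bounded_seqs in Hp; last exact: mem_all_bools.
  rewrite /= Hp /=; move: Hs; rewrite /= in_cons => /orP[/eqP -> //|/mapP[buf Hbuf ->]].
  by rewrite mem_bounded_seqs in Hbuf; last exact: mem_all_tokens.
move=> /andP[Hp Hs]; exists (p, s); split=> //.
  by rewrite mem_bounded_seqs //; exact: mem_all_bools.
move: Hs Hp => /=; case: s => [buf|] Hs _; rewrite in_cons //=; apply/map_f.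
by rewrite mem_bounded_seqs //; exact: mem_all_tokens.
Qed.

Lemma bit_rewrite_logspace : logspace_computable bit_rewrite.
Proof.
apply: (@transduce_logspace _ _ _ _ bit_states); first by rewrite mem_bit_states.
move=> [p s] b; rewrite !mem_bit_states /= => /andP[Hp Hs].
rewrite /bit_next; case: eqP => Hp2 /=.
  case: s Hs => [buf|] Hs; case: (bits_tok _) => //=.
  all: try case: ifP => //=.
  all: rewrite ?size_rcons //.
by rewrite Hs andbT ltn_neqAle Hp andbT; apply/eqP.
Qed.

End BlockRewriting.

Lemma dualK : involutive dual.
Proof.
case=> n f; rewrite /dual /=; congr existT; apply/ffunP => t; rewrite !ffunE negbK.
by congr (f _); apply: val_inj; rewrite /= -map_comp (eq_map negbK) map_id.
Qed.

Lemma dualsetK : involutive dualset.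
Proof. by move=> B; rewrite /dualset -map_comp (eq_map dualK) map_id. Qed.

Lemma bapp_dual f vs : size vs = arity f -> bapp (dual f) vs = ~~ bapp f (map negb vs).
Proof.
case: f => n g /= Hvs; rewrite /bapp /=.
case: insubP => [t _ Ht|]; last by rewrite Hvs eqxx.
case: insubP => [t' _ Ht'|]; last by rewrite size_map Hvs eqxx.
by rewrite ffunE; congr (~~ g _); apply: val_inj; rewrite /= Ht Ht'.
Qed.

Fixpoint forall_forms (P : form -> Prop) (l : seq form) : Prop :=
  if l is p :: l' then P p /\ forall_forms P l' else True.

Definition form_nested_ind (P : form -> Prop) (HV : forall i, P (Var i))
  (HA : forall f args, forall_forms P args -> P (App f args)) : forall phi, P phi :=
  fix F phi := match phi with
  | Var i => HV i
  | App f args => HA f args ((fix G l : forall_forms P l :=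
        if l is p :: l' then conj (F p) (G l') else I) args)
  end.

Lemma forall_forms_all (b c : pred form) l :
  forall_forms (fun p => b p -> c p) l -> all b l -> all c l.
Proof. by elim: l => //= p l IH [Hp Hl] /andP[/Hp -> /(IH Hl)]. Qed.

Lemma forall_forms_map (T : Type) (g h : form -> T) l :
  forall_forms (fun p => g p = h p) l -> map g l = map h l.
Proof. by elim: l => //= p l IH [-> /IH ->]. Qed.

Lemma is_Bformula_sub B B' phi :
  {subset B <= B'} -> is_Bformula B phi -> is_Bformula B' phi.
Proof.
move=> HB; elim/form_nested_ind: phi => //= f args IH /and3P[/HB -> -> Ha] /=.
exact: forall_forms_all Ha.
Qed.

Fixpoint dual_form (phi : form) : form :=
  match phi with Var i => Var i | App f args => App (dual f) (map dual_form args) end.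

Lemma dual_formK : involutive dual_form.
Proof.
elim/form_nested_ind => //= f args IH; rewrite dualK -map_comp.
by rewrite (forall_forms_map (h := id) IH) map_id.
Qed.

Lemma is_Bformula_dual B phi : is_Bformula B phi -> is_Bformula (dualset B) (dual_form phi).
Proof.
elim/form_nested_ind: phi => //= f args IH /and3P[Hf Hs Ha].
by rewrite (map_f dual Hf) size_map Hs all_map; exact: forall_forms_all Ha.
Qed.

Lemma fsize_dual_form Y phi : fsize Y (dual_form phi) = fsize Y phi.
Proof.
case: Y => /=; elim/form_nested_ind: phi => //= f args IH;
  by rewrite -map_comp (forall_forms_map IH).
Qed.

Lemma feval_dual_form B a phi : is_Bformula B phi ->
  feval a (dual_form phi) = ~~ feval (negb \o a) phi.
Proof.
elim/form_nested_ind: phi => /= [i|f args IH /and3P[_ /eqP Hs Ha]]; first by rewrite negbK.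
rewrite -map_comp bapp_dual ?size_map // -map_comp; congr (~~ bapp _ _).
by elim: args IH Ha {Hs} => //= p l IHl [Hp Hl] /andP[/Hp -> /(IHl Hl) ->] /=; rewrite negbK.
Qed.

Lemma fequiv_dual_form B B' psi phi : is_Bformula B psi -> is_Bformula B' phi ->
  fequiv psi phi -> fequiv (dual_form psi) (dual_form phi).
Proof. by move=> Hpsi Hphi H a; rewrite (feval_dual_form _ Hpsi) (feval_dual_form _ Hphi) H. Qed.

Definition dual_gate (g : gate) : gate :=
  match g with In j => In j | Gt f ins => Gt (dual f) ins end.

Definition dual_circuit (c : circuit) : circuit := map dual_gate c.

Lemma dual_circuitK : involutive dual_circuit.
Proof.
move=> c; rewrite /dual_circuit -map_comp -[RHS]map_id; apply: eq_map => -[j|f ins] //=.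
by rewrite dualK.
Qed.

Lemma csize_dual_circuit Y c : csize Y (dual_circuit c) = csize Y c.
Proof. by case: Y; rewrite /= /csize_l /csize_s count_map; apply: eq_count => -[]. Qed.

Lemma is_Bcircuit_dual B c : is_Bcircuit B c -> is_Bcircuit (dualset B) (dual_circuit c).
Proof.
move=> /andP[Hs /allP H]; apply/andP; split; first by rewrite size_map.
apply/allP => i; rewrite size_map => Hi; have := H i Hi.
move: Hi; rewrite mem_iota add0n => /= Hi.
rewrite (nth_map (In 0)) //; case: (nth _ c i) => //= f ins /and3P[Hf -> ->].
by rewrite andbT (map_f dual Hf).
Qed.

Definition gate_wf (i : nat) (g : gate) : bool :=
  if g is Gt f ins then (size ins == arity f) && all (fun j => j < i) ins else true.

Lemma is_Bcircuit_wf B c : is_Bcircuit B c ->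
  forall k, k < size c -> gate_wf k (nth (In 0) c k).
Proof.
move=> /andP[_ /allP H] k Hk; have := H k; rewrite mem_iota add0n => /(_ Hk).
by case: (nth _ c k) => //= f ins /and3P[_ -> ->].
Qed.

Definition cvals_from (a : assignment) (vs : seq bool) (c : circuit) : seq bool :=
  foldl (fun vs g => rcons vs (gate_val a vs g)) vs c.

Lemma size_cvals_from a vs c : size (cvals_from a vs c) = size vs + size c.
Proof. by elim: c vs => [|g c IH] vs /=; rewrite ?addn0 // IH size_rcons addSnnS. Qed.

Lemma gate_val_dual a vs g : gate_wf (size vs) g ->
  gate_val a (map negb vs) (dual_gate g) = ~~ gate_val (negb \o a) vs g.
Proof.
case: g => [j|f ins] /=; first by rewrite negbK.
move=> /andP[/eqP Hs Hins]; rewrite bapp_dual ?size_map //.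
congr (~~ bapp _ _); rewrite -map_comp; apply/eq_in_map => j Hj /=.
by rewrite (nth_map false) ?negbK //; exact: (allP Hins).
Qed.

Lemma cvals_from_dual a c vs :
  (forall k, k < size c -> gate_wf (size vs + k) (nth (In 0) c k)) ->
  cvals_from a (map negb vs) (dual_circuit c) = map negb (cvals_from (negb \o a) vs c).
Proof.
elim: c vs => [|g c IH] vs //= H.
have Hg := H 0 isT; rewrite addn0 in Hg.
rewrite gate_val_dual // -map_rcons IH // => k Hk.
by rewrite size_rcons addSnnS; exact: (H k.+1).
Qed.

Lemma ceval_dual B a c : is_Bcircuit B c ->
  ceval a (dual_circuit c) = ~~ ceval (negb \o a) c.
Proof.
move=> Hc; have := @cvals_from_dual a c [::] (is_Bcircuit_wf Hc).
rewrite /ceval /cvals -/(cvals_from _ _ _) -/(cvals_from _ _ _) /= => ->.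
have : 0 < size (cvals_from (negb \o a) [::] c) by rewrite size_cvals_from; case/andP: Hc.
by case: (cvals_from _ _ _) => //= v vs _; rewrite (last_map negb).
Qed.

Lemma cequiv_dual_circuit B B' psi phi : is_Bcircuit B psi -> is_Bcircuit B' phi ->
  cequiv psi phi -> cequiv (dual_circuit psi) (dual_circuit phi).
Proof. by move=> Hpsi Hphi H a; rewrite (ceval_dual _ Hpsi) (ceval_dual _ Hphi) H. Qed.

Definition gate_over (B : seq bfun) (g : gate) : bool := if g is Gt f _ then f \in B else true.

Lemma is_Bcircuit_gates B c : is_Bcircuit B c -> all (gate_over B) c.
Proof.
move=> /andP[_ /allP H]; apply/(all_nthP (In 0)) => i Hi.
have := H i; rewrite mem_iota add0n Hi => /(_ isT).
by case: (nth _ c i) => //= f ins /and3P[].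
Qed.

Lemma header_bit_toks bs : all header_tok (map bit_tok bs).
Proof. by elim: bs => //= -[] bs ->. Qed.

Lemma header_bin n : all header_tok (bin n).
Proof. by rewrite /bin; case: eqP => // _; apply: header_bit_toks. Qed.

Lemma header_enc_fun g : all header_tok (enc_fun g).
Proof. by rewrite /enc_fun all_cat header_bin /= header_bit_toks. Qed.

Lemma passive_bin n : all passive_tok (bin n).
Proof. exact/header_passive/header_bin. Qed.

Lemma size_enc_fun_dual g : size (enc_fun (dual g)) = size (enc_fun g).
Proof. by case: g => n f; rewrite /enc_fun /= !size_cat /= !size_map. Qed.

Definition binval (ts : seq token) : nat := foldl (fun v t => v.*2 + (t == T1)) 0 ts.

Lemma binrevK fuel n : n <= fuel ->
  foldr (fun (b : bool) v => v.*2 + b) 0 (binrev fuel n) = n.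
Proof.
elim: fuel n => [|fuel IH] [|n] //= Hn.
rewrite IH; first by rewrite uphalfK; case: (odd n) => /=; lia.
by rewrite leq_uphalf_double; move: Hn; lia.
Qed.

Lemma binK : cancel bin binval.
Proof.
move=> n; rewrite /bin; case: eqP => [->//|_].
rewrite /binval map_rev foldl_rev -[RHS](@binrevK n n) //.
by elim: (binrev n n) => //= -[] bs ->.
Qed.

Lemma bit_tok_inj : injective bit_tok.
Proof. by case=> -[]. Qed.

Lemma hash_notin_bin n : Thash \notin bin n.
Proof. by rewrite /bin; case: eqP => // _; apply/mapP => -[[]]. Qed.

Lemma cat_hash_inj (a a' b b' : seq token) : Thash \notin a -> Thash \notin a' ->
  a ++ Thash :: b = a' ++ Thash :: b' -> a = a' /\ b = b'.
Proof.
elim: a a' => [|x a IH] [|y a'] //=.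
- by move=> _ _ [->].
- by move=> _; rewrite in_cons => /norP[/eqP H _] [/H].
- by rewrite in_cons => /norP[/eqP H _] _ [/esym/H].
rewrite !in_cons => /norP[_ Ha] /norP[_ Ha'] [-> H].
by have [-> ->] := IH _ Ha Ha' H.
Qed.

Lemma enc_fun_inj : injective enc_fun.
Proof.
case=> n f [n' f']; rewrite /enc_fun /= => H.
have [/(can_inj binK) En Hgraph] := cat_hash_inj (hash_notin_bin _) (hash_notin_bin _) H.
subst n'; have Hg : fgraph f = fgraph f' by apply/val_inj/(inj_map bit_tok_inj).
by rewrite -(fgraphK f) Hg fgraphK.
Qed.

Section DualReduction.
Variable B : seq bfun.

Definition dual_closure : seq bfun := B ++ dualset B.

Lemma dual_closure_dual g : g \in dual_closure -> dual g \in dual_closure.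
Proof.
rewrite !mem_cat => /orP[Hg|/mapP[h Hh ->]]; first by rewrite (map_f dual Hg) orbT.
by rewrite dualK Hh.
Qed.

Lemma sub_dual_closure : {subset B <= dual_closure}.
Proof. by move=> g Hg; rewrite mem_cat Hg. Qed.

Lemma sub_dualset_dual_closure : {subset dualset B <= dual_closure}.
Proof. by move=> g Hg; rewrite mem_cat Hg orbT. Qed.

Definition fun_block (g : bfun) : seq token := block (enc_fun g).

Lemma fun_block_inj : injective fun_block.
Proof. by move=> g g' /block_inj /enc_fun_inj. Qed.

(* Blocks of symbols outside [dual_closure] are left alone ([nth] falls back to
   its default when [find] fails). *)
Definition dual_block (seg : seq token) : seq token :=
  nth seg [seq fun_block (dual g) | g <- dual_closure]
      (find (fun g => fun_block g == seg) dual_closure).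

Definition block_bound := (\max_(g <- dual_closure) size (enc_fun g)).+1.

Lemma dual_block_fun g : g \in dual_closure -> dual_block (fun_block g) = fun_block (dual g).
Proof.
move=> Hg; have Hhas : has (fun h => fun_block h == fun_block g) dual_closure.
  by apply/hasP; exists g.
rewrite /dual_block (nth_map g) -?has_find //.
by have /eqP/fun_block_inj -> := nth_find g Hhas.
Qed.

Lemma dual_block_involutive u : all header_tok u ->
  exists2 u', dual_block (block u) = block u' &
    [/\ all header_tok u', size u' = size u & dual_block (block u') = block u].
Proof.
move=> Hu; case: (boolP (has (fun g => fun_block g == block u) dual_closure)) => [|Hn].
  move=> /hasP[g Hg /eqP Hgu]; have Eu : enc_fun g = u by apply: block_inj.
  exists (enc_fun (dual g)); first by rewrite -Hgu dual_block_fun.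
  split; [exact: header_enc_fun | by rewrite size_enc_fun_dual Eu |].
  by rewrite -/(fun_block _) dual_block_fun ?dual_closure_dual // dualK Hgu.
have Hid : dual_block (block u) = block u.
  by rewrite /dual_block nth_default // size_map leqNgt -has_find (negbTE Hn).
by exists u; rewrite ?Hid.
Qed.

Notation dual_rewrite := (blk_rewrite block_bound dual_block).
Notation dual_bit_rewrite := (bit_rewrite block_bound dual_block).

Lemma dual_bit_rewriteK : involutive dual_bit_rewrite.
Proof. by apply: bit_rewriteK => // u Hu _; exact: dual_block_involutive. Qed.

Lemma dual_rewrite_fun f ts : f \in dual_closure ->
  dual_rewrite (Tf :: enc_fun f ++ Tlp :: ts) = fun_block (dual f) ++ dual_rewrite ts.
Proof.
move=> Hf; rewrite block_cat blk_rewrite_block ?header_enc_fun // dual_block_fun //.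
by rewrite ifT // ltnS (leq_bigmax_seq _ Hf).
Qed.

Lemma dual_rewrite_form phi ts : is_Bformula dual_closure phi ->
  dual_rewrite (enc_form phi ++ ts) = enc_form (dual_form phi) ++ dual_rewrite ts.
Proof.
elim/form_nested_ind: phi ts => [i|f args IH] ts /=.
  by move=> _; rewrite (blk_rewrite_passive_cat _ _ (u := Tx :: bin i)) //= passive_bin.
move=> /and3P[Hf _ Hargs]; rewrite -catA /= -catA /= dual_rewrite_fun //.
have Hsep ts' : dual_rewrite (sep_by (map enc_form args) ++ ts') =
    sep_by (map enc_form (map dual_form args)) ++ dual_rewrite ts'.
  elim: args IH Hargs {Hf} => //= p l IHl [Hp Hl] /andP[Hpb Hlb].
  case: l IHl Hl Hlb => [|q l] IHl Hl Hlb; first by rewrite /= Hp.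
  rewrite /= -catA Hp // blk_rewrite_passive //.
  by have := IHl Hl Hlb => /= ->; rewrite -catA.
by rewrite Hsep blk_rewrite_passive // /fun_block /block /= -!catA /= -!catA.
Qed.

Lemma passive_sep_by s : all (all passive_tok) s -> all passive_tok (sep_by s).
Proof. by elim: s => //= x [|y s] IH /andP[Hx Hs] //; rewrite all_cat Hx /= IH. Qed.

Lemma dual_rewrite_circuit c ts : all (gate_over dual_closure) c ->
  dual_rewrite (enc_circuit c ++ ts) = enc_circuit (dual_circuit c) ++ dual_rewrite ts.
Proof.
elim: c ts => [|g c IH] ts //= /andP[Hg Hc].
rewrite /enc_circuit /= -/(enc_circuit c) -/(enc_circuit (dual_circuit c)) -!catA -IH //.
case: g Hg => [j|f ins] /= Hg.
  by rewrite (blk_rewrite_passive_cat _ _ (u := Tx :: bin j)) //= passive_bin.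
rewrite -catA /= dual_rewrite_fun // blk_rewrite_passive_cat; last first.
  rewrite all_cat passive_sep_by ?andbT //.
  by apply/allP => _ /mapP[i _ ->]; exact: passive_bin.
by rewrite /fun_block /block /= -!catA /= -!catA.
Qed.

Lemma dual_rewrite_size_tail k : dual_rewrite (Thash :: bin k) = Thash :: bin k.
Proof. by rewrite blk_rewrite_passive_id //= passive_bin. Qed.

Lemma dual_bit_rewrite_tokens ts : dual_bit_rewrite (to_bits ts) = to_bits (dual_rewrite ts).
Proof. by have := bit_rewrite_tokens block_bound dual_block ts (r := [::]) isT; rewrite !cats0. Qed.

Lemma MEE_dual X Y B1 x : {subset B1 <= dual_closure} ->
  MEE X Y B1 x -> MEE X Y (dualset B1) (dual_bit_rewrite x).
Proof.
case: X => HB1 [phi [k [-> [Hphi [psi [Hpsi [Hsize Hequiv]]]]]]].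
- exists (dual_form phi), k; split.
    rewrite dual_bit_rewrite_tokens dual_rewrite_form ?dual_rewrite_size_tail //.
    exact: is_Bformula_sub Hphi.
  split; first exact: is_Bformula_dual.
  exists (dual_form psi); split; first exact: is_Bformula_dual.
  by rewrite fsize_dual_form; split=> //; exact: fequiv_dual_form Hpsi Hphi Hequiv.
exists (dual_circuit phi), k; split.
  rewrite dual_bit_rewrite_tokens dual_rewrite_circuit ?dual_rewrite_size_tail //.
  by apply: sub_all (is_Bcircuit_gates Hphi) => -[//|f ins /= /HB1].
split; first exact: is_Bcircuit_dual.
exists (dual_circuit psi); split; first exact: is_Bcircuit_dual.
by rewrite csize_dual_circuit; split=> //; exact: cequiv_dual_circuit Hpsi Hphi Hequiv.
Qed.

Lemma MEE_dual_reducible X Y : logspace_reducible (MEE X Y B) (MEE X Y (dualset B)).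
Proof.
exists dual_bit_rewrite; split; first exact: bit_rewrite_logspace.
move=> x; split; first exact/MEE_dual/sub_dual_closure.
rewrite -{2}(dualsetK B) -{2}(dual_bit_rewriteK x).
exact/MEE_dual/sub_dualset_dual_closure.
Qed.

End DualReduction.

Theorem mainTheorem3 (B : seq bfun) (X : kindX) (Y : kindY) :
  logspace_equiv (MEE X Y B) (MEE X Y (dualset B)).
Proof.
split; first exact: MEE_dual_reducible.
by have := MEE_dual_reducible (dualset B) X Y; rewrite dualsetK.
Qed.
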